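(* Let $p,q$ be integers with $p\ge2$ and $0<q<p$. Let $g(x)=(1-p^2x)^{-q/p}$, $h(x)=(1-p^2x)^{-(p-q)/p}$, and $f(x)=\dfrac{-x}{1-p^2x}$. Then the dual Riordan array satisfies $R^*(g,f)=R(h,f)$.
   Context: For power series $g$ and $f$ with $f(0)=0$, the Riordan array $R(g,f)$ is the infinite matrix with entries $R(g,f)_{n,k}=[x^n]\bigl(g(x)f(x)^k\bigr)$ for $n,k\ge0$. If moreover $f'(0)\ne0$, the recursive matrix $D(g,f)$ is the doubly infinite matrix with entries $D(g,f)_{n,k}=[x^n]\bigl(g(x)f(x)^k\bigr)$ for all integers $n,k$, where for $k<0$, $f(x)^k$ is the multiplicative inverse of $f(x)^{-k}$ in the ring of formal Laurent series. The dual Riordan array $R^*(g,f)$ is the infinite matrix with entries $R^*(g,f)_{i,j}=D(g,f)_{-j,-i}$ for $i,j\ge0$ (the anti-transpose of the upper left quadrant of $D(g,f)$). *)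

From HB Require Import structures.
From mathcomp Require Import all_boot all_order all_algebra.
Set Implicit Arguments. Unset Strict Implicit. Unset Printing Implicit Defensive.
Import Order.TTheory GRing.Theory Num.Theory.
Local Open Scope ring_scope.

Definition ps := nat -> rat.

Definition psmul (a b : ps) : ps :=
  fun n => \sum_(i < n.+1) a i * b (n - i)%N.

Definition psone : ps := fun n => (n == 0%N)%:R.

Definition psexp (a : ps) (k : nat) : ps := iter k (psmul a) psone.

Fixpoint psinv_seq (a : ps) (n : nat) : seq rat :=
  match n with
  | 0%N => [:: (a 0%N)^-1]
  | n'.+1 => let s := psinv_seq a n' in
      rcons s (- (a 0%N)^-1 * \sum_(1 <= i < n'.+2) a i * nth 0 s (n'.+1 - i)%N)
  end.
Definition psinv (a : ps) : ps := fun n => nth 0 (psinv_seq a n) n.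

(* (1 + c x)^alpha for a rational exponent alpha, via the generalized
   binomial series: [x^n] = (alpha choose n) c^n *)
Definition psbinom (alpha c : rat) : ps :=
  fun n => (\prod_(i < n) (alpha - i%:R)) / (n`!)%:R * c ^+ n.

Definition riordan (g f : ps) (n k : nat) : rat := psmul g (psexp f k) n.

(* Recursive matrix D(g,f)_{n,k} = [x^n] g f^k for all integers n,k.
   For k = -m < 0, f = x * u with u := f/x (u 0 = f'(0) <> 0); in the ring
   of formal Laurent series the inverse of f^m = x^m u^m is
   x^(-m) * (u^-1)^m, so [x^n] g f^(-m) = [x^(n+m)] g (u^-1)^m
   (0 if n + m < 0). *)
Definition recmat (g f : ps) (n k : int) : rat :=
  match k with
  | Posz k' => match n with Posz n' => riordan g f n' k' | Negz _ => 0 end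
  | Negz m' =>
      let m := m'.+1 in
      let u : ps := fun i => f i.+1 in
      match (n + m%:Z)%R with
      | Posz e => psmul g (psexp (psinv u) m) e
      | Negz _ => 0
      end
  end.

Definition dual_riordan (g f : ps) (i j : nat) : rat :=
  recmat g f (- (j%:Z)) (- (i%:Z)).

Definition gser (p q : nat) : ps :=
  psbinom (- (q%:R / p%:R)) (- (p ^ 2)%:R).
Definition hser (p q : nat) : ps :=
  psbinom (- ((p - q)%:R / p%:R)) (- (p ^ 2)%:R).
Definition fser (p : nat) : ps :=
  psmul (fun n => - (n == 1%N)%:R) (psbinom (-1) (- (p ^ 2)%:R)).

From HB Require Import structures.
From mathcomp Require Import all_boot all_order all_algebra.
From mathcomp Require Import ring zify.
From Stdlib Require Import FunctionalExtensionality.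
Set Implicit Arguments. Unset Strict Implicit. Unset Printing Implicit Defensive.
Import Order.TTheory GRing.Theory Num.Theory.
Local Open Scope ring_scope.

(* Write [c = -p^2], so that [f = -x (1 + c x)^-1] and all series involved are
   binomial series [(1 + c x)^a]. Then [f^j = (-x)^j (1 + c x)^-j], and the
   Laurent inverse of [f^i] is [(-x)^-i (1 + c x)^i]. Hence, for
   [g = (1 + c x)^a],
     [R*(g,f)_(i,j) = (-1)^i [x^(i-j)] (1 + c x)^(a+i)]   and
     [R((1 + c x)^b, f)_(i,j) = (-1)^j [x^(i-j)] (1 + c x)^(b-j)],
   and upper reflection of binomial coefficients,
   [binom(a+i, e) = (-1)^e binom(-a-i+e-1, e)], makes them equal exactly when
   [b = -1 - a]. The exponents [-q/p] and [-(p-q)/p] are such a pair. *)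

Definition gbinom (a : rat) (n : nat) : rat := (\prod_(i < n) (a - i%:R)) / (n`!)%:R.

Lemma gbinom0 a : gbinom a 0 = 1.
Proof. by rewrite /gbinom big_ord0 fact0 divr1. Qed.

Lemma gbinomS_mul a n : gbinom a n.+1 * n.+1%:R = (a - n%:R) * gbinom a n.
Proof.
rewrite /gbinom big_ord_recr /= factS natrM.
have Sn_neq0 : n.+1%:R != 0 :> rat by rewrite pnatr_eq0.
have fact_neq0 : (n`!)%:R != 0 :> rat by rewrite pnatr_eq0 -lt0n fact_gt0.
field; rewrite ?Sn_neq0 ?fact_neq0 //=.
by rewrite -(natrD _ 1 n) add1n.
Qed.

(* Induction on [n]: split the factor [n+1] of each term as [k + (n+1-k)] and
   apply the recurrence [gbinomS_mul] to each factor. *)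
Lemma gbinom_vandermonde a b n :
  \sum_(k < n.+1) gbinom a k * gbinom b (n - k) = gbinom (a + b) n.
Proof.
elim: n => [|n IH]; first by rewrite big_ord1 !gbinom0 mulr1.
have Sn_neq0 : n.+1%:R != 0 :> rat by rewrite pnatr_eq0.
apply: (mulIf Sn_neq0); rewrite gbinomS_mul -IH mulr_suml.
rewrite (eq_bigr (fun k : 'I_n.+2 => gbinom a k * gbinom b (n.+1 - k) * k%:R
   + gbinom a k * gbinom b (n.+1 - k) * (n.+1 - k)%N%:R)); last first.
  by move=> k _; rewrite -mulrDr -natrD subnKC // -ltnS.
rewrite big_split /= big_ord_recl /= mulr0 add0r.
rewrite [X in _ + X = _]big_ord_recr /= subnn mulr0 addr0.
rewrite mulr_sumr -big_split /=; apply: eq_bigr => k _.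
have kn : (k <= n)%N by rewrite -ltnS.
rewrite /bump /= add1n subSS subSn //.
by rewrite [X in X + _]mulrAC gbinomS_mul -[X in _ + X]mulrA gbinomS_mul natrB //; ring.
Qed.

Lemma gbinom_reflect a e : gbinom (- a + e%:R - 1) e = (-1) ^+ e * gbinom a e.
Proof.
rewrite /gbinom mulrA; congr (_ / _).
rewrite (reindex_inj rev_ord_inj) /=.
rewrite (eq_bigr (fun k : 'I_e => - (a - k%:R))); last first.
  move=> k _; have ke := ltn_ord k.
  have -> : (e - k.+1)%N%:R = e%:R - (k + 1)%N%:R :> rat by rewrite natrB ?addn1.
  by rewrite natrD; ring.
by rewrite prodrN card_ord.
Qed.

Lemma psmulC A B : psmul A B = psmul B A.
Proof.
apply: functional_extensionality => n; rewrite /psmul (reindex_inj rev_ord_inj) /=.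
apply: eq_bigr => k _; rewrite subSS mulrC; congr (_ * _); congr (B _).
by rewrite subKn // -ltnS.
Qed.

Lemma psmul1 A : psmul A psone = A.
Proof.
apply: functional_extensionality => n.
rewrite /psmul big_ord_recr /= subnn /psone /= mulr1.
by rewrite big1 ?add0r // => k _; rewrite subn_eq0 leqNgt ltn_ord /= mulr0.
Qed.

Lemma psmulZl a A B : psmul (fun n => a * A n) B = fun n => a * psmul A B n.
Proof.
apply: functional_extensionality => n; rewrite /psmul mulr_sumr.
by apply: eq_bigr => k _; rewrite mulrA.
Qed.

Lemma psmulZr a A B : psmul A (fun n => a * B n) = fun n => a * psmul A B n.
Proof. by rewrite psmulC psmulZl psmulC. Qed.

Definition shift (k : nat) (B : ps) : ps :=
  fun n => if (k <= n)%N then B (n - k)%N else 0.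

Lemma shift0 B : shift 0 B = B.
Proof. by apply: functional_extensionality => n; rewrite /shift subn0. Qed.

Lemma shift1_shift k B : shift 1 (shift k B) = shift k.+1 B.
Proof.
by apply: functional_extensionality => -[|n]; rewrite /shift //= subn1 /= ltnS.
Qed.

Lemma psmul_shiftr k A B : psmul A (shift k B) = shift k (psmul A B).
Proof.
apply: functional_extensionality => n; rewrite /psmul /shift.
case: leqP => kn; last first.
  apply: big1 => i _; case: leqP => h; last by rewrite mulr0.
  by have := ltn_ord i; lia.
rewrite -(big_mkord xpredT (fun i => A i * (if (k <= n - i)%N then B (n - i - k)%N else 0))).
rewrite -(big_mkord xpredT (fun i => A i * B (n - k - i)%N)).
rewrite (big_cat_nat _ (n := (n - k).+1)) //=; last by lia.
rewrite [X in _ + X]big1_seq ?addr0; last first.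
  move=> i; rewrite mem_index_iota => /andP[h1 h2].
  by case: leqP => h3; [lia | rewrite mulr0].
apply: eq_big_seq => i; rewrite mem_index_iota => /andP[_ h].
by case: leqP => h3; [congr (_ * B _) | ]; lia.
Qed.

Lemma psmul_shiftl k A B : psmul (shift k A) B = shift k (psmul A B).
Proof. by rewrite psmulC psmul_shiftr psmulC. Qed.

Lemma psexpS A k : psexp A k.+1 = psmul A (psexp A k).
Proof. by []. Qed.

Lemma psexpZ a A k : psexp (fun n => a * A n) k = fun n => a ^+ k * psexp A k n.
Proof.
elim: k => [|k IH]; first by apply: functional_extensionality => n; rewrite mul1r.
rewrite !psexpS IH psmulZl psmulZr.
by apply: functional_extensionality => n; rewrite exprS mulrA.
Qed.

Lemma psexp_shift1 A k : psexp (shift 1 A) k = shift k (psexp A k).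
Proof.
elim: k => [|k IH]; first by rewrite shift0.
by rewrite !psexpS IH psmul_shiftl psmul_shiftr shift1_shift.
Qed.

Lemma psinv_unique a v : a 0%N != 0 -> psmul a v = psone -> psinv a = v.
Proof.
move=> a0_neq0 av1.
have coef_av n := congr1 (fun w => w n) av1.
suff psinv_seqE n : psinv_seq a n = mkseq v n.+1.
  by apply: functional_extensionality => n; rewrite /psinv psinv_seqE nth_mkseq.
elim: n => [|n IH] /=.
  have := coef_av 0%N; rewrite /psmul /psone big_ord1 subn0 /= => av0.
  by congr [:: _]; apply: (mulfI a0_neq0); rewrite divff // av0.
rewrite IH [in RHS]mkseqS; congr rcons.
have := coef_av n.+1; rewrite /psmul /psone big_ord_recl /= subn0 => avS.
rewrite big_add1 /= big_mkord.
rewrite (eq_bigr (fun i : 'I_n.+1 => a (bump 0 i) * v (n.+1 - bump 0 i)%N)); last first.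
  by move=> i _; rewrite nth_mkseq /bump //=; have := ltn_ord i; lia.
have -> : \sum_(i < n.+1) a (bump 0 i) * v (n.+1 - bump 0 i)%N = - (a 0%N * v n.+1).
  by apply/eqP; rewrite -subr_eq0 opprK addrC avS.
by field.
Qed.

Lemma psbinomE a c n : psbinom a c n = gbinom a n * c ^+ n.
Proof. by []. Qed.

Lemma psbinom0 c : psbinom 0 c = psone.
Proof.
apply: functional_extensionality => -[|n]; rewrite psbinomE.
  by rewrite gbinom0 /psone mul1r.
by rewrite /gbinom big_ord_recl /= subrr !mul0r.
Qed.

Lemma psmul_binom a b c : psmul (psbinom a c) (psbinom b c) = psbinom (a + b) c.
Proof.
apply: functional_extensionality => n.
rewrite /psmul psbinomE -gbinom_vandermonde mulr_suml.
apply: eq_bigr => k _; rewrite !psbinomE.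
have kn : (k <= n)%N by rewrite -ltnS.
have -> : c ^+ n = c ^+ k * c ^+ (n - k) by rewrite -exprD subnKC.
by ring.
Qed.

Lemma psexp_binom a c k : psexp (psbinom a c) k = psbinom (k%:R * a) c.
Proof.
elim: k => [|k IH]; first by rewrite mul0r psbinom0.
by rewrite psexpS IH psmul_binom -add1n natrD mulrDl mul1r.
Qed.

Lemma psbinom_reflect a c e :
  psbinom (- a + e%:R - 1) c e = (-1) ^+ e * psbinom a c e.
Proof. by rewrite psbinomE gbinom_reflect -mulrA. Qed.

Section NegXOverBinom.
Variable c : rat.

Let f : ps := psmul (fun n => - (n == 1%N)%:R) (psbinom (-1) c).

Lemma f_shift : f = fun n => -1 * shift 1 (psbinom (-1) c) n.
Proof.
rewrite /f.
have -> : (fun n : nat => - (n == 1%N)%:R : rat) = fun n => -1 * shift 1 psone n.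
  by apply: functional_extensionality => -[|[|n]]; rewrite /shift /psone /= ?mulr0 ?mulr1 ?oppr0.
by rewrite psmulZl psmul_shiftl psmulC psmul1.
Qed.

Lemma psexp_f j : psexp f j = fun n => (-1) ^+ j * shift j (psbinom (- j%:R) c) n.
Proof. by rewrite f_shift psexpZ psexp_shift1 psexp_binom mulrN1. Qed.

Lemma psinv_f_div_x : psinv (fun n => f n.+1) = fun n => -1 * psbinom 1 c n.
Proof.
have f_div_x : (fun n => f n.+1) = fun n => -1 * psbinom (-1) c n.
  by apply: functional_extensionality => n; rewrite f_shift /shift /= subn1.
rewrite f_div_x; apply: psinv_unique.
  by rewrite psbinomE gbinom0 expr0 !mulr1 oppr_eq0 oner_eq0.
rewrite psmulZl psmulZr psmul_binom addNr psbinom0.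
by apply: functional_extensionality => n; rewrite mulrA mulrNN !mul1r.
Qed.

Lemma riordan_binom b i j : riordan (psbinom b c) f i j =
  if (j <= i)%N then (-1) ^+ j * psbinom (b - j%:R) c (i - j)%N else 0.
Proof.
rewrite /riordan psexp_f psmulZr psmul_shiftr psmul_binom /shift.
by case: leqP; rewrite ?mulr0.
Qed.

Lemma dual_riordan_binom a i j : dual_riordan (psbinom a c) f i j =
  if (j <= i)%N then (-1) ^+ i * psbinom (a + i%:R) c (i - j)%N else 0.
Proof.
rewrite /dual_riordan; case: i => [|i].
  case: j => [|j] //=.
  by rewrite /riordan /= psmul1 addr0 !psbinomE !gbinom0.
rewrite (_ : - (i.+1%:Z) = Negz i) // /recmat psinv_f_div_x psexpZ psexp_binom.
rewrite psmulZr mulr1 psmul_binom.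
case: (leqP j i.+1) => ji; last first.
  by rewrite (_ : - (j%:Z) + (i.+1)%:Z = Negz (j - i.+2)) //; lia.
by rewrite (_ : - (j%:Z) + (i.+1)%:Z = Posz (i.+1 - j)) //; lia.
Qed.

Lemma dual_riordan_binom_reflect a i j :
  dual_riordan (psbinom a c) f i j = riordan (psbinom (-1 - a) c) f i j.
Proof.
rewrite dual_riordan_binom riordan_binom; case: leqP => // ji.
have [e ->] : exists e, i = (j + e)%N by exists (i - j)%N; lia.
rewrite addKn exprD -mulrA -psbinom_reflect natrD.
by congr (_ * psbinom _ c e); ring.
Qed.

End NegXOverBinom.

Theorem theorem5 (p q : nat) (hp : (2 <= p)%N) (hq : (0 < q < p)%N) :
  forall i j : nat,
    dual_riordan (gser p q) (fser p) i j = riordan (hser p q) (fser p) i j.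
Proof.
move=> i j; rewrite /gser /hser /fser dual_riordan_binom_reflect.
have p_neq0 : p%:R != 0 :> rat by rewrite pnatr_eq0 -lt0n; lia.
have qp : (q <= p)%N by lia.
by rewrite natrB // opprK; congr (riordan (psbinom _ _) _ _ _); field.
Qed.
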